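(* (i) With $a=1$, $\boldsymbol{\alpha}_0=\boldsymbol{\beta}_0=1$ and for $n\ge1$ \[ \boldsymbol{\alpha}_n(1,k)=q^{-n}-q^{n},\qquad \boldsymbol{\beta}_n(1,k)=\frac{(k,k;q)_{n}(1-2kq^n+kq^{2n})}{(1-k)q^{n}(q,q;q)_n}, \] the pair $(\boldsymbol{\alpha}_n,\boldsymbol{\beta}_n)$ is a WP-Bailey pair relative to $a=1$. (ii) With $a=q$, $\boldsymbol{\alpha}_0=\boldsymbol{\beta}_0=1$ and for $n\ge1$ \[ \boldsymbol{\alpha}_n(q,k)=q^{-n}-q^{n+1},\qquad \boldsymbol{\beta}_n(q,k)=\frac{(k;q)_{n}(k;q)_{n-1}(1-kq^{n-1}-kq^n+kq^{2n})}{q^n(q,q^2;q)_n}, \] the pair $(\boldsymbol{\alpha}_n,\boldsymbol{\beta}_n)$ is a WP-Bailey pair relative to $a=q$.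
   Context: Notation: $(x;q)_n=\prod_{i=0}^{n-1}(1-xq^i)$, $(x_1,\dots,x_j;q)_n=(x_1;q)_n\cdots(x_j;q)_n$. A pair of sequences $(\boldsymbol{\alpha}_n(a,k,q),\boldsymbol{\beta}_n(a,k,q))_{n\ge0}$ is a WP-Bailey pair (relative to $a$, with parameter $k$) if $\boldsymbol{\alpha}_0=1$ and for all $n\ge0$ \[\boldsymbol{\beta}_n=\sum_{j=0}^n\frac{(k/a;q)_{n-j}(k;q)_{n+j}}{(q;q)_{n-j}(aq;q)_{n+j}}\boldsymbol{\alpha}_j.\] $k\neq1$ and parameters generic. *)

From HB Require Import structures.
From mathcomp Require Import all_boot all_order all_algebra.
Set Implicit Arguments. Unset Strict Implicit. Unset Printing Implicit Defensive.
Import Order.TTheory GRing.Theory Num.Theory.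
Local Open Scope ring_scope.

Definition qpoch (F : fieldType) (x q : F) (n : nat) : F :=
  \prod_(i < n) (1 - x * q ^+ i).

Definition WP_Bailey_pair (F : fieldType) (a k q : F)
    (alpha beta : nat -> F) : Prop :=
  alpha 0%N = 1 /\
  forall n : nat,
    beta n = \sum_(j < n.+1)
      (qpoch (k / a) q (n - j) * qpoch k q (n + j)
        / (qpoch q q (n - j) * qpoch (a * q) q (n + j))) * alpha j.

(* Both pairs are proved by telescoping.  For fixed n, the j-th summand
   kernel(n, j) * alpha_j of the WP-Bailey sum is, for 1 <= j <= n, a
   difference T(n, j) - T(n, j + 1) of an explicit hypergeometric term
   T(n, j) vanishing at j = n + 1; so the sum collapses to
   kernel(n, 0) + T(n, 1), which a rational-function identity identifies
   with beta_n. *)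

From HB Require Import structures.
From mathcomp Require Import all_boot all_order all_algebra.
From mathcomp Require Import ring.
Set Implicit Arguments. Unset Strict Implicit. Unset Printing Implicit Defensive.
Import GRing.Theory.
Local Open Scope ring_scope.

Section QPochhammer.
Variable F : fieldType.
Implicit Types x q : F.

Lemma qpoch0 x q : qpoch x q 0 = 1.
Proof. by rewrite /qpoch big_ord0. Qed.

Lemma qpochS x q n : qpoch x q n.+1 = qpoch x q n * (1 - x * q ^+ n).
Proof. by rewrite /qpoch big_ord_recr. Qed.

Lemma qpochSl x q n : qpoch x q n.+1 = (1 - x) * qpoch (x * q) q n.
Proof.
rewrite /qpoch big_ord_recl expr0 mulr1; congr (_ * _).
by apply: eq_bigr => i _; rewrite /= exprS mulrA.
Qed.

Lemma qpoch_expr_neq0 q s m : (forall i, (0 < i)%N -> q ^+ i != 1) ->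
  qpoch (q ^+ s.+1) q m != 0.
Proof.
move=> hq; elim: m => [|m IHm]; first by rewrite qpoch0 oner_neq0.
by rewrite qpochS mulf_neq0 // subr_eq0 eq_sym -exprD hq.
Qed.

End QPochhammer.

Section NoRootOfUnity.
Variables (F : fieldType) (q : F).
Hypothesis hq : forall i : nat, (0 < i)%N -> q ^+ i != 1.

Lemma subr1_exprS_neq0 m : 1 - q * q ^+ m != 0.
Proof. by rewrite subr_eq0 eq_sym -exprS hq. Qed.

Lemma qpoch_q_neq0 m : qpoch q q m != 0.
Proof. by rewrite -[X in qpoch X]expr1 qpoch_expr_neq0. Qed.

Lemma qpoch_qq_neq0 m : qpoch (q * q) q m != 0.
Proof. by rewrite -expr2 qpoch_expr_neq0. Qed.

End NoRootOfUnity.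

Section Telescoping.
Variable F : fieldType.

Definition wp_kernel (a k q : F) (n j : nat) : F :=
  qpoch (k / a) q (n - j) * qpoch k q (n + j)
    / (qpoch q q (n - j) * qpoch (a * q) q (n + j)).

Lemma WP_Bailey_pair_telescoping (a k q : F) (alpha beta : nat -> F)
    (tail : nat -> nat -> F) :
  alpha 0%N = 1 -> beta 0%N = 1 ->
  (forall n, tail n n.+1 = 0) ->
  (forall j r, wp_kernel a k q (j.+1 + r) j.+1 * alpha j.+1
               = tail (j.+1 + r)%N j.+1 - tail (j.+1 + r)%N j.+2) ->
  (forall n, beta n.+1 = wp_kernel a k q n.+1 0 + tail n.+1 1%N) ->
  WP_Bailey_pair a k q alpha beta.
Proof.
move=> alpha0 beta0 tail_last tail_step beta_succ; split=> // -[|n].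
  by rewrite big_ord1 alpha0 beta0 /= !qpoch0 !(mul1r, invr1).
rewrite -(big_mkord xpredT (fun j => wp_kernel a k q n.+1 j * alpha j)).
rewrite big_ltn // alpha0 mulr1 beta_succ; congr (_ + _).
rewrite (@telescope_sumr_eq _ _ _ (fun m => - tail n.+1 m)) //.
  by rewrite tail_last oppr0 opprK add0r.
case=> [|j] // /andP[_]; rewrite ltnS => /subnKC <-.
by rewrite tail_step opprK addrC.
Qed.

End Telescoping.

Section PairAtOne.
Variables (F : fieldType) (q k : F).
Hypotheses (hq0 : q != 0) (hq : forall i : nat, (0 < i)%N -> q ^+ i != 1)
  (hk : k != 1).

(* [tail1 n m] is the closed form of the sum of the summands j = m, ..., n. *)
Definition tail1 (n m : nat) : F :=
  (q ^- n - q ^+ m) / (1 - k) * qpoch k q (n.+1 - m) * qpoch k q (n + m)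
  * (1 - q ^+ (n.+1 - m)) / (qpoch q q (n.+1 - m) * qpoch q q (n + m)).

Lemma tail1_last n : tail1 n n.+1 = 0.
Proof. by rewrite /tail1 subnn expr0 subrr !(mulr0, mul0r). Qed.

Lemma tail1_step j r :
  wp_kernel 1 k q (j.+1 + r) j.+1 * (q ^- j.+1 - q ^+ j.+1)
  = tail1 (j.+1 + r) j.+1 - tail1 (j.+1 + r) j.+2.
Proof.
rewrite /wp_kernel /tail1 divr1 mul1r -addnS !addKn.
rewrite [(j.+1 + r.+1)%N]addnS subSS addKn [(_ + j.+2)%N]addnS.
have nk : 1 - k != 0 by rewrite subr_eq0 eq_sym.
have nr := qpoch_q_neq0 hq r; have nr1 := subr1_exprS_neq0 hq r.
have nM := qpoch_q_neq0 hq (j.+1 + r + j.+1).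
have nM1 := subr1_exprS_neq0 hq (j.+1 + r + j.+1).
rewrite !(qpochS _ q r) !(qpochS _ q (j.+1 + r + j.+1)) !exprD !exprS in nM1 *.
by field; rewrite nk nr nM nr1 nM1 hq0 !expf_neq0.
Qed.

Lemma beta1_succE n :
  qpoch k q n.+1 * qpoch k q n.+1 * (1 - 2 * k * q ^+ n.+1 + k * q ^+ (2 * n.+1))
    / ((1 - k) * q ^+ n.+1 * (qpoch q q n.+1 * qpoch q q n.+1))
  = wp_kernel 1 k q n.+1 0 + tail1 n.+1 1.
Proof.
rewrite /wp_kernel /tail1 divr1 mul1r !subn0 subSS subn0 addn0 addn1 mul2n -addnn.
rewrite (qpochS k q n.+1) (qpochS q q n.+1).
have nk : 1 - k != 0 by rewrite subr_eq0 eq_sym.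
have nn := qpoch_q_neq0 hq n.+1; have nn1 := subr1_exprS_neq0 hq n.+1.
rewrite !exprD !exprS in nn1 *.
by field; rewrite nk nn nn1 hq0 !expf_neq0.
Qed.

End PairAtOne.

Section PairAtQ.
Variables (F : fieldType) (q k : F).
Hypotheses (hq0 : q != 0) (hq : forall i : nat, (0 < i)%N -> q ^+ i != 1).

(* [tail2 n m] is the closed form of the sum of the summands j = m, ..., n. *)
Definition tail2 (n m : nat) : F :=
  (q ^- n - q ^+ m.+1) * qpoch k q (n - m) * qpoch k q (n + m)
  * (1 - q ^+ (n.+1 - m)) / (qpoch q q (n.+1 - m) * qpoch (q * q) q (n + m)).

Lemma tail2_last n : tail2 n n.+1 = 0.
Proof. by rewrite /tail2 subnn expr0 subrr !(mulr0, mul0r). Qed.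

Lemma tail2_step j r :
  wp_kernel q k q (j.+1 + r) j.+1 * (q ^- j.+1 - q ^+ j.+2)
  = tail2 (j.+1 + r) j.+1 - tail2 (j.+1 + r) j.+2.
Proof.
case: r => [|r].
  rewrite /wp_kernel /tail2 !addn0 subnn subSnn subnn expr0 subrr.
  rewrite !(mulr0, mul0r, subr0) (qpochS q q 0) !qpoch0 !expr0 !mulr1 !mul1r.
  have nM := qpoch_qq_neq0 hq (j.+1 + j.+1).
  have n1 : 1 - q != 0 by rewrite subr_eq0 eq_sym -[q]expr1 hq.
  by rewrite !exprS; field; rewrite nM n1 !expf_neq0.
have subn_S2 m : (j.+1 + m.+1 - j.+2 = m)%N by rewrite addnS subSS addKn.
rewrite /wp_kernel /tail2 -addnS !addKn !subn_S2 [(_ + j.+2)%N]addnS.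
rewrite (qpochSl (k / q)) divfK //.
have nr := qpoch_q_neq0 hq r; have nr1 := subr1_exprS_neq0 hq r.
have nr2 := subr1_exprS_neq0 hq r.+1.
have nM := qpoch_qq_neq0 hq (j.+1 + r.+1 + j.+1).
have nM1 : 1 - q * q * q ^+ (j.+1 + r.+1 + j.+1) != 0.
  by rewrite -mulrA -exprS subr1_exprS_neq0.
rewrite (qpochS q q r.+1) !(qpochS _ q r) !(qpochS _ q (j.+1 + r.+1 + j.+1)).
rewrite !exprD !exprS in nr2 nM1 *.
by field; rewrite nr nr1 nr2 nM nM1 hq0 !expf_neq0.
Qed.

Lemma beta2_succE n :
  qpoch k q n.+1 * qpoch k q n * (1 - k * q ^+ n - k * q ^+ n.+1 + k * q ^+ (2 * n.+1))
    / (q ^+ n.+1 * (qpoch q q n.+1 * qpoch (q ^+ 2) q n.+1))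
  = wp_kernel q k q n.+1 0 + tail2 n.+1 1.
Proof.
rewrite /wp_kernel /tail2 !subn0 !subn1 /= addn0 addn1 expr2 mul2n -addnn.
rewrite (qpochSl (k / q)) divfK // (qpochS k q n.+1) !(qpochS k q n).
rewrite (qpochS (q * q) q n.+1).
have nr := qpoch_q_neq0 hq n.+1; have nM := qpoch_qq_neq0 hq n.+1.
have nM1 : 1 - q * q * q ^+ n.+1 != 0 by rewrite -mulrA -exprS subr1_exprS_neq0.
rewrite !exprD !exprS in nM1 *.
by field; rewrite nr nM nM1 hq0 !expf_neq0.
Qed.

End PairAtQ.


Theorem mainTheorem9 (F : fieldType) (q k : F)
    (hq0 : q != 0) (hq : forall i : nat, (0 < i)%N -> q ^+ i != 1)
    (hk : k != 1) :
  WP_Bailey_pair 1 k q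
    (fun n => if n == 0%N then 1 else q ^- n - q ^+ n)
    (fun n => if n == 0%N then 1 else
       qpoch k q n * qpoch k q n * (1 - 2 * k * q ^+ n + k * q ^+ (2 * n))
       / ((1 - k) * q ^+ n * (qpoch q q n * qpoch q q n)))
  /\
  WP_Bailey_pair q k q
    (fun n => if n == 0%N then 1 else q ^- n - q ^+ n.+1)
    (fun n => if n == 0%N then 1 else
       qpoch k q n * qpoch k q n.-1
         * (1 - k * q ^+ n.-1 - k * q ^+ n + k * q ^+ (2 * n))
       / (q ^+ n * (qpoch q q n * qpoch (q ^+ 2) q n))).
Proof.
split.
- apply: (WP_Bailey_pair_telescoping (tail := tail1 q k)) => //.
  + exact: tail1_last.
  + exact: tail1_step.
  + exact: beta1_succE.
- apply: (WP_Bailey_pair_telescoping (tail := tail2 q k)) => //.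
  + exact: tail2_last.
  + exact: tail2_step.
  + exact: beta2_succE.
Qed.
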